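(* Let $a\ge 2$ be even and let $c$ be odd. If $0<c<\frac a2$, then $U=\{(a,-a),(c,-c)\}$ is avoidable. If $c=\frac a2$, then $U=\{(a,-a),(\frac a2,-\frac a2),(0,0)\}$ is avoidable.
   Context: The bicyclic inverse semigroup is $\mathcal{B}=\{(a,b)\in\mathbb{Z}\times\mathbb{Z}\mid a\ge 0,\ a+b\ge 0\}$ with multiplication $(a,b)(c,d)=(\max\{c+d,a\}-d,\ b+d)$. A subset $U\subseteq\mathcal{B}$ is called avoidable if $\mathcal{B}$ can be partitioned into two subsets $A$ and $B$ such that no element of $U$ can be written as a product $xy$ of two distinct elements $x\neq y$ both in $A$, or both in $B$. *)

From Stdlib Require Import ZArith.
Open Scope Z_scope.

(* Elements of the bicyclic inverse semigroup B = {(a,b) in Z x Z | a >= 0, a+b >= 0}. *)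
Definition inBic (x : Z * Z) : Prop := 0 <= fst x /\ 0 <= fst x + snd x.

Definition bmul (x y : Z * Z) : Z * Z :=
  (Z.max (fst y + snd y) (fst x) - snd y, snd x + snd y).

(* U is avoidable: B can be partitioned into A and B (B = complement of A in the
   semigroup, encoded by a predicate P : "x in A") such that no u in U is a
   product x y of distinct x, y lying in the same part. *)
Definition avoidable (U : Z * Z -> Prop) : Prop :=
  exists P : Z * Z -> Prop,
    forall x y : Z * Z, inBic x -> inBic y -> x <> y ->
      (P x <-> P y) -> ~ U (bmul x y).

(* Write u_n := (n, -n).  A product x y of elements of B equals u_n only if
   x = u_p is diagonal, and then either y = u_q with p + q = n, or y is
   off-diagonal with second coordinate p - n.  Colour u_p by h p and an
   off-diagonal (y1, y2) by "not h (s + y2)".  The partition avoids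
   {u_n | n in N} as soon as h separates every two distinct p, q >= 0 with
   p + q in N, and h p agrees with h (p + s - n) for p >= 1 and n in N.
   Taking s = a, both conditions hold for "h p := (p - a/2) mod d lies in
   [1, k]" with d = 2k + 1 odd: for p + q = n in N, q - a/2 is congruent to
   -(p - a/2) modulo d, and negation swaps [1, k] with [k + 1, 2k]; the
   shifts a - n are multiples of d.  For c < a/2 take d = a - c; for
   c = a/2 take d = a/2 and also put the exceptional point 0 in the other
   class from a/2 and a. *)
From Stdlib Require Import ZArith Lia.
Open Scope Z_scope.

Definition diagonal (N : Z -> Prop) (u : Z * Z) : Prop :=
  exists n, N n /\ u = (n, -n).

Lemma avoidable_mono (U V : Z * Z -> Prop) :
  (forall u, U u -> V u) -> avoidable V -> avoidable U.
Proof.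
  intros UV [P HP]; exists P.
  intros x y Hx Hy Hxy HPxy HU; exact (HP x y Hx Hy Hxy HPxy (UV _ HU)).
Qed.

Lemma bmul_eq_diagonal (x1 x2 y1 y2 n : Z) :
  inBic (x1, x2) -> inBic (y1, y2) -> bmul (x1, x2) (y1, y2) = (n, -n) ->
  x2 = - x1 /\ y1 + y2 <= x1 /\ y2 = x1 - n.
Proof.
  unfold inBic, bmul; simpl; intros Hx Hy E; injection E; lia.
Qed.

Section DiagonalColouring.

Variables (s : Z) (N h : Z -> Prop).

Hypothesis h_separates : forall n p q, N n -> 0 <= p -> 0 <= q ->
  p + q = n -> p <> q -> ~ (h p <-> h q).
Hypothesis h_shift_invariant : forall n p, N n -> 1 <= p ->
  (h p <-> h (p + s - n)).

Definition colour (x : Z * Z) : Prop :=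
  (fst x + snd x = 0 /\ h (fst x)) \/ (fst x + snd x <> 0 /\ ~ h (s + snd x)).

Lemma colour_diagonal (x1 x2 : Z) : x1 + x2 = 0 -> (colour (x1, x2) <-> h x1).
Proof. unfold colour; simpl; intros; tauto. Qed.

Lemma colour_off_diagonal (x1 x2 : Z) :
  x1 + x2 <> 0 -> (colour (x1, x2) <-> ~ h (s + x2)).
Proof. unfold colour; simpl; intros; tauto. Qed.

Lemma avoidable_diagonal : avoidable (diagonal N).
Proof.
  exists colour.
  intros [x1 x2] [y1 y2] Hx Hy Hxy Hcol [n [Hn E]].
  destruct (bmul_eq_diagonal _ _ _ _ _ Hx Hy E) as (Ex2 & Hle & Ey2).
  unfold inBic in Hx, Hy; simpl in Hx, Hy.
  rewrite colour_diagonal in Hcol by lia.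
  destruct (Z.eq_dec (y1 + y2) 0) as [Hy0 | Hy0].
  - rewrite colour_diagonal in Hcol by exact Hy0.
    refine (h_separates n x1 y1 Hn _ _ _ _ Hcol); try lia.
    intros Exy; apply Hxy; f_equal; lia.
  - rewrite colour_off_diagonal in Hcol by exact Hy0.
    assert (Hshift := h_shift_invariant n x1 Hn ltac:(lia)).
    replace (x1 + s - n) with (s + y2) in Hshift by lia.
    tauto.
Qed.

End DiagonalColouring.

Definition lower_half (k w : Z) : Prop := 1 <= w mod (2 * k + 1) <= k.

Lemma lower_half_periodic (k w t : Z) :
  lower_half k (w + t * (2 * k + 1)) <-> lower_half k w.
Proof. unfold lower_half; rewrite Z_mod_plus_full; reflexivity. Qed.

Lemma not_lower_half_multiple (k t : Z) : ~ lower_half k (t * (2 * k + 1)).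
Proof.
  rewrite <- (Z.add_0_l (t * _)), lower_half_periodic.
  unfold lower_half; rewrite Z.mod_0_l; lia.
Qed.

Lemma lower_half_opp (k w t : Z) : 0 <= k -> w mod (2 * k + 1) <> 0 ->
  ~ (lower_half k w <-> lower_half k (- w + t * (2 * k + 1))).
Proof.
  intros Hk Hw; rewrite lower_half_periodic; unfold lower_half.
  rewrite Z_mod_nz_opp_full by exact Hw.
  pose proof (Z.mod_pos_bound w (2 * k + 1) ltac:(lia)); lia.
Qed.

Lemma Z_mod_neq0_small (w d : Z) : 0 < d -> - d < w < d -> w <> 0 -> w mod d <> 0.
Proof.
  intros Hd Hw Hw0 Hmod.
  apply Z.mod_divide in Hmod as [t ->]; [| lia].
  destruct (Z.lt_trichotomy t 0) as [Ht | [Ht | Ht]]; nia.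
Qed.

Lemma lower_half_mirror (k e p q t : Z) : 0 <= k ->
  p + q = 2 * e + t * (2 * k + 1) -> - (2 * k + 1) < p - e < 2 * k + 1 ->
  p <> e -> ~ (lower_half k (p - e) <-> lower_half k (q - e)).
Proof.
  intros Hk Hpq Hp Hpe.
  replace (q - e) with (- (p - e) + t * (2 * k + 1)) by lia.
  apply lower_half_opp; [exact Hk |].
  apply Z_mod_neq0_small; lia.
Qed.

Lemma avoidable_two_diagonal (e f : Z) : 0 < 2 * f + 1 < e ->
  avoidable (diagonal (fun n => n = 2 * e \/ n = 2 * f + 1)).
Proof.
  intros Hfe.
  set (k := e - f - 1).
  apply (avoidable_diagonal (2 * e) _ (fun p => lower_half k (p - e))).
  - intros n p q [-> | ->] Hp Hq Hpq Hne.
    + apply (lower_half_mirror k e p q 0); lia.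
    + apply (lower_half_mirror k e p q (-1)); lia.
  - intros n p [-> | ->] _.
    + replace (p + 2 * e - 2 * e) with p by lia; reflexivity.
    + replace (p + 2 * e - (2 * f + 1) - e) with ((p - e) + 1 * (2 * k + 1))
        by lia.
      symmetry; apply lower_half_periodic.
Qed.

Lemma avoidable_three_diagonal (f : Z) : 0 <= f ->
  avoidable (diagonal (fun n => n = 2 * (2 * f + 1) \/ n = 2 * f + 1 \/ n = 0)).
Proof.
  intros Hf.
  set (e := 2 * f + 1).
  apply (avoidable_diagonal (2 * e) _ (fun p => p = 0 \/ lower_half f (p - e))).
  - intros n p q Hn Hp Hq Hpq Hne.
    assert (Hn' : n = 2 * e \/ n = e) by (unfold e in *; lia).
    assert (Hends : forall r, r = e \/ r = 2 * e -> ~ lower_half f (r - e)).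
    { intros r [-> | ->].
      - replace (e - e) with (0 * (2 * f + 1)) by lia.
        apply not_lower_half_multiple.
      - replace (2 * e - e) with (1 * (2 * f + 1)) by (unfold e; lia).
        apply not_lower_half_multiple. }
    destruct (Z.eq_dec p 0) as [Hp0 | Hp0].
    { assert (q <> 0) by (unfold e in *; lia).
      assert (~ lower_half f (q - e)) by (apply Hends; lia).
      tauto. }
    destruct (Z.eq_dec q 0) as [Hq0 | Hq0].
    { assert (~ lower_half f (p - e)) by (apply Hends; lia).
      tauto. }
    assert (~ (lower_half f (p - e) <-> lower_half f (q - e))).
    { destruct Hn' as [-> | ->];
        [apply (lower_half_mirror f e p q 0) | apply (lower_half_mirror f e p q (-1))];
        unfold e in *; lia. }
    tauto.
  - intros n p Hn Hp.
    destruct Hn as [-> | [-> | ->]].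
    + replace (p + 2 * e - 2 * e) with p by lia; reflexivity.
    + replace (p + 2 * e - e - e) with ((p - e) + 1 * (2 * f + 1))
        by (unfold e; lia).
      rewrite lower_half_periodic; unfold e; intuition lia.
    + replace (p + 2 * e - 0 - e) with ((p - e) + 2 * (2 * f + 1))
        by (unfold e; lia).
      rewrite lower_half_periodic; unfold e; intuition lia.
Qed.

Theorem proposition3p6 (a c : Z) :
  2 <= a -> Z.Even a -> Z.Odd c ->
  (0 < c < a / 2 ->
     avoidable (fun u => u = (a, -a) \/ u = (c, -c))) /\
  (c = a / 2 ->
     avoidable (fun u => u = (a, -a) \/ u = (a / 2, - (a / 2)) \/ u = (0, 0))).
Proof.
  intros Ha [e ->] [f ->].
  replace (2 * e / 2) with e by (rewrite Z.mul_comm, Z.div_mul by lia; reflexivity).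
  split; intros Hc.
  - apply avoidable_mono with (2 := avoidable_two_diagonal e f Hc).
    intros u [-> | ->]; eexists; split; try reflexivity; auto.
  - subst e.
    apply avoidable_mono with (2 := avoidable_three_diagonal f ltac:(lia)).
    intros u [-> | [-> | ->]]; eexists; split; try reflexivity; auto.
Qed.
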